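(* Let $(\mathcal H,\mathcal A)$ and $(\mathcal H',\mathcal A')$ be hypergraph pairs (with vertices in a common vertex set) such that for any $\sigma\in\mathcal H$ and $\sigma'\in\mathcal H'$, either $\sigma\cap\sigma'=\emptyset$ or $\sigma\cap\sigma'\in\mathcal H\cap\mathcal H'$; and for any $\tau\in\mathcal A$ and $\tau'\in\mathcal A'$, either $\tau\cap\tau'=\emptyset$ or $\tau\cap\tau'\in\mathcal A\cap\mathcal A'$. Then there is a long exact sequence of relative embedded homology $$\cdots\to H_n(\mathcal H\cap\mathcal H',\mathcal A\cap\mathcal A')\to H_n(\mathcal H,\mathcal A)\oplus H_n(\mathcal H',\mathcal A')\to H_n(\mathcal H\cup\mathcal H',\mathcal A\cup\mathcal A')\to H_{n-1}(\mathcal H\cap\mathcal H',\mathcal A\cap\mathcal A')\to\cdots.$$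
   Context: A hypergraph is a finite set of nonempty finite subsets of a vertex set (hyperedges); an $n$-hyperedge has $n+1$ vertices. A hypergraph pair $(\mathcal H,\mathcal A)$ means $\mathcal A\subseteq\mathcal H$. Unions and intersections of hypergraphs are taken as sets of hyperedges. The associated simplicial complex is $\Delta\mathcal H=\{\sigma\ne\emptyset:\sigma\subseteq\tau\text{ for some }\tau\in\mathcal H\}$. Fix an abelian coefficient group $G$; chains are simplicial chains with coefficients in $G$ (all inside the chain complex of the full simplex on the vertex set), with boundary $\partial$; $G(\mathcal H)_n$ is the group of $G$-linear combinations of $n$-hyperedges of $\mathcal H$, and $\mathrm{Inf}_n(\mathcal H)=G(\mathcal H)_n\cap\partial_n^{-1}(G(\mathcal H)_{n-1})$. Relative embedded homology: $H_n(\mathcal H,\mathcal A)=H_n(\mathrm{Inf}_*(\mathcal H)/\mathrm{Inf}_*(\mathcal A))$. *)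

From HB Require Import structures.
From mathcomp Require Import all_boot all_order all_algebra.
Set Implicit Arguments. Unset Strict Implicit. Unset Printing Implicit Defensive.
Import Order.TTheory GRing.Theory.
Local Open Scope ring_scope.

(* Vertex set: a finite type V (totally ordered by enum_rank, used to orient
   simplices).  A simplex / hyperedge is a {set V}; an n-simplex has n+1
   vertices.  Chains of the full simplex on V with coefficients in the abelian
   group G are finitely supported functions {set V} -> G; a chain of degree n
   is one supported on sets of cardinality n+1. *)
Notation chain V G := {ffun {set V} -> G}.

Definition hypergraph (V : finType) (H : {set {set V}}) : Prop := set0 \notin H.

(* simplicial boundary of the full simplex on V:
   d [v_0 < ... < v_n] = \sum_i (-1)^i [v_0 .. ^v_i .. v_n], and d_0 = 0. *)
Definition bd (V : finType) (G : zmodType) (c : chain V G) : chain V G :=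
  [ffun t : {set V} =>
     if t == set0 then 0
     else \sum_(v in ~: t)
            (if odd #|[set u in t | enum_rank u < enum_rank v]%N|
             then - c (v |: t) else c (v |: t))].

(* c belongs to G(H)_n : a G-linear combination of n-hyperedges of H *)
Definition inG (V : finType) (G : zmodType) (H : {set {set V}}) (n : nat)
  (c : chain V G) : Prop :=
  forall s : {set V}, c s != 0 -> (s \in H) /\ #|s| = n.+1.

(* Inf_n(H) = G(H)_n \cap d_n^{-1}(G(H)_{n-1})   (G(H)_{-1} = 0 = C_{-1}) *)
Definition Inf (V : finType) (G : zmodType) (H : {set {set V}}) (n : nat)
  (c : chain V G) : Prop :=
  inG H n c /\ match n with 0 => True | n'.+1 => inG H n' (bd c) end.

(* relative n-cycles of Inf_*(H)/Inf_*(A), given by representatives *)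
Definition relZ (V : finType) (G : zmodType) (H A : {set {set V}}) (n : nat)
  (c : chain V G) : Prop :=
  Inf H n c /\ match n with 0 => True | n'.+1 => Inf A n' (bd c) end.

(* representatives of zero in H_n(H,A): c \in d(Inf_{n+1}(H)) + Inf_n(A) *)
Definition relB (V : finType) (G : zmodType) (H A : {set {set V}}) (n : nat)
  (c : chain V G) : Prop :=
  exists d a : chain V G, Inf H n.+1 d /\ Inf A n a /\ c = bd d + a.

From HB Require Import structures.
From mathcomp Require Import all_boot all_order all_algebra.
Set Implicit Arguments. Unset Strict Implicit. Unset Printing Implicit Defensive.
Import GRing.Theory.
Local Open Scope ring_scope.

(* The argument is the snake lemma for the sequence of quotient complexes
     0 -> Inf(HnH')/Inf(AnA') -> Inf(H)/Inf(A) (+) Inf(H')/Inf(A')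
       -> Inf(HuH')/Inf(AuA') -> 0,
   made explicit on representatives.  Its only non-formal input is the
   splitting lemma [Inf_split]: when hyperedges of K and L meet in a common
   hyperedge (or not at all), an infimum chain c of K :|: L is the sum of its
   K-part restrict K c, an infimum chain of K, and c - restrict K c, an
   infimum chain of L. *)

Section Boundary.
Variables (V : finType) (G : zmodType).
Implicit Types (c d : chain V G) (t : {set V}).

Definition ins_sign t (v : V) : bool :=
  odd #|[set u in t | (enum_rank u < enum_rank v)%N]|.

Definition signed (b : bool) (x : G) : G := if b then - x else x.

Lemma signed_sum b (P : pred V) (F : V -> G) :
  signed b (\sum_(v | P v) F v) = \sum_(v | P v) signed b (F v).
Proof. by case: b; rewrite /signed // sumrN. Qed.

Lemma bdE c t : t != set0 ->
  bd c t = \sum_(v in ~: t) signed (ins_sign t v) (c (v |: t)).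
Proof. by move=> /negbTE nt; rewrite ffunE nt. Qed.

Lemma ins_signU1 (v w : V) t : v \notin t ->
  ins_sign (v |: t) w = ins_sign t w (+) (enum_rank v < enum_rank w)%N.
Proof.
move=> vt; rewrite /ins_sign; set below := [set u in t | _].
have [vw|wv] := boolP (enum_rank v < enum_rank w)%N.
  have -> : [set u in v |: t | (enum_rank u < enum_rank w)%N] = v |: below.
    by apply/setP=> u; rewrite !inE; case: (eqVneq u v) => [->|].
  by rewrite cardsU1 inE (negbTE vt) addbT.
have -> : [set u in v |: t | (enum_rank u < enum_rank w)%N] = below.
  by apply/setP=> u; rewrite !inE; case: (eqVneq u v) => [->|] //=; rewrite (negbTE wv) andbF.
by rewrite addbF.
Qed.

Lemma bd_is_zmod_morphism : {morph (@bd V G) : c d / c - d}.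
Proof.
move=> c d; apply/ffunP=> t; rewrite !ffunE; case: ifP => _; first by rewrite subr0.
rewrite -sumrB; apply: eq_bigr => v _; rewrite !ffunE.
by case: ifP => _ //; rewrite opprD.
Qed.

HB.instance Definition _ := GRing.isZmodMorphism.Build _ _ (@bd V G)
  bd_is_zmod_morphism.

(* d o d = 0: the terms indexed by the ordered pairs (v, w) and (w, v) of
   added vertices cancel. *)
Lemma bd_bd c : bd (bd c) = 0.
Proof.
apply/ffunP=> t; rewrite [RHS]ffunE.
have [->|nt] := eqVneq t set0; first by rewrite ffunE eqxx.
rewrite bdE //.
under eq_bigr => v.
  rewrite inE => vt.
  rewrite bdE; last by apply/set0Pn; exists v; rewrite setU11.
  rewrite signed_sum.
  under eq_bigr => w.
    rewrite !inE negb_or => /andP[wv wt].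
    rewrite ins_signU1 //.
  over.
over.
rewrite /= pair_big_dep /=.
rewrite (bigID (fun p : V * V => (enum_rank p.1 < enum_rank p.2)%N)) /=.
rewrite [X in _ + X](reindex_inj (h := fun p : V * V => (p.2, p.1))) /=; last first.
  by move=> [a b] [a' b'] /= [-> ->].
rewrite [X in _ + X](eq_bigl (fun p : V * V => ((p.1 \in ~: t) && (p.2 \in ~: (p.1 |: t)))
   && (enum_rank p.1 < enum_rank p.2)%N)); last first.
  move=> [a b] /=; rewrite !inE; case: (eqVneq a b) => [->|ab] /=; first by rewrite !andbF.
  rewrite -leqNgt ltn_neqAle.
  have -> : (enum_rank a != enum_rank b :> nat) = true.
    by apply/negP => /eqP /ord_inj /enum_rank_inj /eqP; rewrite (negbTE ab).
  by case: (a \in t); case: (b \in t).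
rewrite -big_split /=; apply: big1 => [[a b]] /= /andP[_ h].
have -> : (enum_rank b < enum_rank a)%N = false by rewrite ltnNge ltnW.
rewrite h setUCA addbT addbF.
by case: (ins_sign t a); case: (ins_sign t b); rewrite /signed /= ?opprK ?subrr ?addNr.
Qed.

Lemma bd_support c f : bd c f != 0 ->
  f != set0 /\ exists2 v, v \notin f & c (v |: f) != 0.
Proof.
rewrite ffunE; have [->|nf] := eqVneq f set0; first by rewrite eqxx.
move=> hs; split=> //; apply/exists_inP; apply: contraNT hs => /exists_inPn h.
rewrite big1 // => v; rewrite inE => /h /negbNE /eqP ->.
by case: ifP; rewrite ?oppr0.
Qed.

End Boundary.

Section InfimumChains.
Variables (V : finType) (G : zmodType).
Implicit Types (K L : {set {set V}}) (c d : chain V G).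

Lemma inG0 K n : inG K n (0 : chain V G).
Proof. by move=> s; rewrite ffunE eqxx. Qed.

Lemma inGD K n c d : inG K n c -> inG K n d -> inG K n (c + d).
Proof.
move=> hc hd s; rewrite ffunE; have [->|/hc //] := eqVneq (c s) 0.
by rewrite add0r => /hd.
Qed.

Lemma inGN K n c : inG K n c -> inG K n (- c).
Proof. by move=> hc s; rewrite ffunE oppr_eq0 => /hc. Qed.

Lemma inG_sub K L n c : K \subset L -> inG K n c -> inG L n c.
Proof. by move=> KL hc s /hc [/(subsetP KL) ? ?]. Qed.

Lemma inGI K L n c : inG K n c -> inG L n c -> inG (K :&: L) n c.
Proof. by move=> hK hL s cs; have [? ?] := hK s cs; have [? _] := hL s cs; rewrite inE; split => //; apply/andP. Qed.

Lemma Inf0 K n : Inf K n (0 : chain V G).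
Proof. by split; [exact: inG0 | case: n => // n; rewrite raddf0; exact: inG0]. Qed.

Lemma InfD K n c d : Inf K n c -> Inf K n d -> Inf K n (c + d).
Proof.
case: n => [|n] [hc1 hc2] [hd1 hd2]; (split; first exact: inGD) => //.
by rewrite raddfD; exact: inGD.
Qed.

Lemma InfN K n c : Inf K n c -> Inf K n (- c).
Proof.
case: n => [|n] [hc1 hc2]; (split; first exact: inGN) => //.
by rewrite raddfN; exact: inGN.
Qed.

Lemma InfB K n c d : Inf K n c -> Inf K n d -> Inf K n (c - d).
Proof. by move=> hc hd; apply: InfD => //; apply: InfN. Qed.

Lemma Inf_sub K L n c : K \subset L -> Inf K n c -> Inf L n c.
Proof.
by move=> KL; case: n => [|n] [hc1 hc2]; split=> //; exact: (inG_sub KL).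
Qed.

Lemma InfI K L n c : Inf K n c -> Inf L n c -> Inf (K :&: L) n c.
Proof. by case: n => [|n] [hK1 hK2] [hL1 hL2]; split => //; exact: inGI. Qed.

Lemma Inf_bd K n c : Inf K n.+1 c -> Inf K n (bd c).
Proof. by case=> _ h; split=> //; case: n h => // n _; rewrite bd_bd; exact: inG0. Qed.

End InfimumChains.

Section Splitting.
Variables (V : finType) (G : zmodType).
Implicit Types (K L : {set {set V}}) (c d : chain V G).

Definition cond K L :=
  forall s s', s \in K -> s' \in L -> s :&: s' = set0 \/ s :&: s' \in K :&: L.

Lemma cond_sym K L : cond K L -> cond L K.
Proof. by move=> hKL s s' sL s'K; rewrite setIC [L :&: K]setIC; exact: hKL. Qed.

Lemma cond_face K L s s' : cond K L -> s \in K -> s' \in L ->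
  s :&: s' != set0 -> s :&: s' \in K.
Proof. by move=> hKL sK s'L; case: (hKL _ _ sK s'L) => [->|]; rewrite ?eqxx // inE => /andP[]. Qed.

Definition restrict K c : chain V G := [ffun s => if s \in K then c s else 0].

Lemma restrict_is_zmod_morphism K : {morph restrict K : c d / c - d}.
Proof. by move=> c d; apply/ffunP=> s; rewrite !ffunE; case: ifP; rewrite ?subr0. Qed.

HB.instance Definition _ K := GRing.isZmodMorphism.Build _ _ (restrict K)
  (restrict_is_zmod_morphism K).

(* A face f of a hyperedge v |: f of c1 is either a face of a hyperedge
   w |: f of c2, hence equal to their intersection, or it lies in
   K :|: L; in both cases the condition puts f in K. *)
Lemma Inf_summand K L n c c1 c2 :
  cond K L -> Inf (K :|: L) n c -> c = c1 + c2 -> inG K n c1 -> inG L n c2 ->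
  (forall s, c1 s != 0 -> c2 s = 0) -> Inf K n c1.
Proof.
move=> hKL [_ hc] ec h1 h2 disj; split=> //.
case: n hc h1 h2 => // n hc h1 h2 f hf.
have [nf [v vf hv]] := bd_support hf.
have [vK vc] := h1 _ hv.
split; last by move: vc; rewrite cardsU1 vf add1n => -[].
have [e2|n2] := eqVneq (bd c2 f) 0.
  have : bd c f != 0 by rewrite ec raddfD ffunE e2 addr0.
  case/hc => /setUP[] // fL _.
  have efI : (v |: f) :&: f = f := setIidPr (subsetUr _ _).
  by rewrite -efI; apply: cond_face hKL vK fL _; rewrite efI.
have [_ [w wf hw]] := bd_support n2.
have [wL _] := h2 _ hw.
have vw : v != w by apply: contraNneq hw => <-; rewrite disj ?eqxx.
have efI : (v |: f) :&: (w |: f) = f.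
  rewrite -setUIl; suff -> : [set v] :&: [set w] = set0 by rewrite set0U.
  apply/setP=> u; rewrite !inE; apply/negbTE/andP => -[/eqP -> /eqP ew].
  by rewrite ew eqxx in vw.
by rewrite -efI; apply: cond_face hKL vK wL _; rewrite efI.
Qed.

Lemma Inf_split K L n c : cond K L -> Inf (K :|: L) n c ->
  Inf K n (restrict K c) /\ Inf L n (c - restrict K c).
Proof.
move=> hKL hc.
have hK : inG K n (restrict K c).
  by move=> s; rewrite ffunE; case: ifP => sK; rewrite ?eqxx // => /hc.1 [].
have hL : inG L n (c - restrict K c).
  move=> s; rewrite !ffunE; case: ifP => sK; first by rewrite subrr eqxx.
  by rewrite subr0 => /hc.1 [/setUP[]]; rewrite ?sK.
have disj s : restrict K c s != 0 -> (c - restrict K c) s = 0.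
  by rewrite !ffunE; case: ifP; rewrite ?eqxx // => _ _; rewrite subrr.
split; first exact: (Inf_summand hKL hc (esym (subrKC _ _)) hK hL disj).
apply: (Inf_summand (cond_sym hKL) _ (esym (addrNK _ _)) hL hK); first by rewrite setUC.
by move=> s; apply: contraNeq => /disj ->; rewrite eqxx.
Qed.

End Splitting.

Section RelativeClasses.
Variables (V : finType) (G : zmodType).
Implicit Types (K L : {set {set V}}) (c d : chain V G).

Lemma relB_bd K L n d a : Inf K n.+1 d -> Inf L n a -> relB K L n (bd d + a).
Proof. by move=> hd ha; exists d, a. Qed.

Lemma relB0 K L n : relB K L n (0 : chain V G).
Proof. by exists 0, 0; rewrite raddf0 addr0; split; [|split]; rewrite //; exact: Inf0. Qed.

Lemma relBN K L n c : relB K L n c -> relB K L n (- c).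
Proof. by move=> [d [a [hd [ha ->]]]]; rewrite opprD -raddfN; apply: relB_bd; exact: InfN. Qed.

Lemma relBD K L n c c' : relB K L n c -> relB K L n c' -> relB K L n (c + c').
Proof.
move=> [d [a [hd [ha ->]]]] [d' [a' [hd' [ha' ->]]]].
by rewrite addrACA -raddfD; apply: relB_bd; exact: InfD.
Qed.

Lemma relB_sub K L (K' L' : {set {set V}}) n c :
  K \subset K' -> L \subset L' -> relB K L n c -> relB K' L' n c.
Proof. by move=> sK sL [d [a [hd [ha ->]]]]; apply: relB_bd; [exact: Inf_sub hd|exact: Inf_sub ha]. Qed.

Lemma relB_relZ K L n c : L \subset K -> relB K L n c -> relZ K L n c.
Proof.
move=> sLK [d [a [hd [ha ->]]]]; split; first exact: (InfD (Inf_bd hd) (Inf_sub sLK ha)).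
by case: n hd ha => // m hd ha; rewrite raddfD /= bd_bd add0r; exact: Inf_bd.
Qed.

Lemma relZD K L n c c' : relZ K L n c -> relZ K L n c' -> relZ K L n (c + c').
Proof.
case: n => [|m] [h1 h2] [h3 h4]; (split; first exact: InfD) => //.
by rewrite raddfD; exact: InfD.
Qed.

Lemma relZB K L n c c' : relZ K L n c -> relZ K L n c' -> relZ K L n (c - c').
Proof.
case: n => [|m] [h1 h2] [h3 h4]; (split; first exact: InfB) => //.
by rewrite raddfB; exact: InfB.
Qed.

Lemma relZI K L (K' L' : {set {set V}}) n c :
  relZ K L n c -> relZ K' L' n c -> relZ (K :&: K') (L :&: L') n c.
Proof. by case: n => [|m] [h1 h2] [h3 h4]; (split; first exact: InfI) => //; exact: InfI. Qed.

End RelativeClasses.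

Lemma sub_swap (G : zmodType) (x1 x2 y1 y2 : G) :
  x1 + x2 = y1 + y2 -> x1 - y1 = y2 - x2.
Proof. by move=> e; apply/eqP; rewrite subr_eq addrAC (addrC y2) -e addrK. Qed.

Section ConnectingMap.
Variables (V : finType) (G : zmodType) (H A H' A' : {set {set V}}).
Hypotheses (sAH : A \subset H) (sAH' : A' \subset H').

(* Zig-zag of the snake lemma: if y1 + y2 (y1 over H, y2 over H') has boundary
   b1 + b2 (b1 over A, b2 over A'), then bd y1 - b1 = b2 - bd y2 is a relative
   cycle of the intersection pair. *)
Lemma zigzag_relZ n (y1 y2 b1 b2 : chain V G) :
  Inf H n.+1 y1 -> Inf H' n.+1 y2 -> Inf A n b1 -> Inf A' n b2 ->
  bd y1 + bd y2 = b1 + b2 -> relZ (H :&: H') (A :&: A') n (bd y1 - b1).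
Proof.
move=> h1 h2 hb1 hb2 /sub_swap E; split.
  apply: InfI; first exact: (InfB (Inf_bd h1) (Inf_sub sAH hb1)).
  by rewrite E; exact: (InfB (Inf_sub sAH' hb2) (Inf_bd h2)).
case: n h1 h2 hb1 hb2 E => // n h1 h2 hb1 hb2 E; apply: InfI.
  by rewrite raddfB /= bd_bd sub0r; exact: (InfN (Inf_bd hb1)).
by rewrite E raddfB /= bd_bd subr0; exact: (Inf_bd hb2).
Qed.

Lemma zigzag_unique n (y1 y2 b1 b2 y1' y2' b1' b2' : chain V G) :
  y1 + y2 = y1' + y2' -> b1 + b2 = b1' + b2' ->
  Inf H n.+1 y1 -> Inf H' n.+1 y2 -> Inf H n.+1 y1' -> Inf H' n.+1 y2' ->
  Inf A n b1 -> Inf A' n b2 -> Inf A n b1' -> Inf A' n b2' ->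
  relB (H :&: H') (A :&: A') n ((bd y1 - b1) - (bd y1' - b1')).
Proof.
move=> ey eb h1 h2 h1' h2' hb1 hb2 hb1' hb2'.
have -> : (bd y1 - b1) - (bd y1' - b1') = bd (y1 - y1') + (b1' - b1).
  by rewrite [bd (_ - _)]raddfB opprB addrACA [RHS]addrACA (addrC (- b1)).
apply: relB_bd; apply: InfI; try exact: InfB.
- by rewrite (sub_swap ey); exact: InfB.
- by rewrite (sub_swap (esym eb)); exact: InfB.
Qed.

End ConnectingMap.

Section MayerVietoris.
Variables (V : finType) (G : zmodType) (H A H' A' : {set {set V}}).
Hypotheses (sAH : A \subset H) (sAH' : A' \subset H').
Hypotheses (cH : cond H H') (cA : cond A A').
Implicit Types (a b c w z : chain V G).

Let HU := H :|: H'.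
Let AU := A :|: A'.
Let HI := H :&: H'.
Let AI := A :&: A'.

Lemma relB_union_split n c : relB HU AU n c ->
  exists2 c1, relB H A n c1 & relB H' A' n (c - c1).
Proof.
move=> [d [p [hd [hp ->]]]].
have [hd1 hd2] := Inf_split cH hd; have [hp1 hp2] := Inf_split cA hp.
exists (bd (restrict H d) + restrict A p); first exact: relB_bd.
by rewrite opprD addrACA -[bd d - _]raddfB; exact: relB_bd.
Qed.

Definition delta w : chain V G := bd (restrict H w) - restrict A (bd w).

Lemma delta_is_zmod_morphism : {morph delta : c w / c - w}.
Proof. by move=> c w; rewrite /delta !raddfB /= addrACA. Qed.

HB.instance Definition _ := GRing.isZmodMorphism.Build _ _ delta
  delta_is_zmod_morphism.

(* delta sends relative cycles of the union to relative cycles of the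
   intersection (the zig-zag of the canonical splitting of w). *)
Lemma delta_relZ n w : relZ HU AU n.+1 w -> relZ HI AI n (delta w).
Proof.
move=> [hw hbw]; have [h1 h2] := Inf_split cH hw; have [h3 h4] := Inf_split cA hbw.
by apply: zigzag_relZ h1 h2 h3 h4 _; rewrite // -raddfD !subrKC.
Qed.

Lemma delta_zigzag n w y1 y2 b1 b2 : relZ HU AU n.+1 w ->
  w = y1 + y2 -> bd w = b1 + b2 ->
  Inf H n.+1 y1 -> Inf H' n.+1 y2 -> Inf A n b1 -> Inf A' n b2 ->
  relB HI AI n ((bd y1 - b1) - delta w).
Proof.
move=> [hw hbw] ew ebw h1 h2 hb1 hb2.
have [k1 k2] := Inf_split cH hw; have [k3 k4] := Inf_split cA hbw.
by apply: (zigzag_unique _ _ h1 h2 k1 k2 hb1 hb2 k3 k4); rewrite ?subrKC.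
Qed.

Lemma delta_sum n w y1 y2 : relZ HU AU n.+1 w -> w = y1 + y2 ->
  relZ H A n.+1 y1 -> relZ H' A' n.+1 y2 -> relB HI AI n (delta w).
Proof.
move=> hw ew [h1 hb1] [h2 hb2].
have ebw : bd w = bd y1 + bd y2 by rewrite ew raddfD.
have := delta_zigzag hw ew ebw h1 h2 hb1 hb2.
by rewrite subrr sub0r => /relBN; rewrite opprK.
Qed.

Lemma delta_relB n c : relB HU AU n.+1 c -> relB HI AI n (delta c).
Proof.
move=> hc; have hcZ := relB_relZ (setUSS sAH sAH') hc.
have [c1 h1 h2] := relB_union_split hc.
exact: (delta_sum hcZ (esym (subrKC c1 c)) (relB_relZ sAH h1) (relB_relZ sAH' h2)).
Qed.

Lemma delta_relB_left n w : relZ HU AU n.+1 w -> relB H A n (delta w).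
Proof.
move=> [hw hbw]; have [h1 _] := Inf_split cH hw; have [h3 _] := Inf_split cA hbw.
exact: (relB_bd h1 (InfN h3)).
Qed.

Lemma delta_relB_right n w : relZ HU AU n.+1 w -> relB H' A' n (- delta w).
Proof.
move=> [hw hbw]; have [_ h2] := Inf_split cH hw; have [_ h4] := Inf_split cA hbw.
have -> : - delta w = bd (w - restrict H w) - (bd w - restrict A (bd w)).
  by rewrite /delta [bd (_ - _)]raddfB !opprB [RHS]addrC addrA subrK.
exact: (relB_bd h2 (InfN h4)).
Qed.

Lemma exact_at_intersection n z : relZ HI AI n z ->
  (relB H A n z /\ relB H' A' n (- z)) <->
  (exists w, relZ HU AU n.+1 w /\ relB HI AI n (z - delta w)).
Proof.
move=> hz; split.
  move=> [[d [a [hd [ha ez]]]] [d' [a' [hd' [ha' ez']]]]].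
  have ebd : bd (d + d') = - a + - a'.
    rewrite raddfD /=.
    have -> : bd d = z - a by rewrite ez addrK.
    have -> : bd d' = - z - a' by rewrite ez' addrK.
    by rewrite addrACA subrr add0r.
  have hw : relZ HU AU n.+1 (d + d').
    split; first exact: (InfD (Inf_sub (subsetUl _ _) hd) (Inf_sub (subsetUr _ _) hd')).
    rewrite ebd; exact: (InfD (InfN (Inf_sub (subsetUl _ _) ha)) (InfN (Inf_sub (subsetUr _ _) ha'))).
  exists (d + d'); split => //.
  have := delta_zigzag hw (erefl _) ebd hd hd' (InfN ha) (InfN ha').
  by rewrite opprK -ez.
move=> [w [hw hzw]].
have hzw_left := relB_sub (subsetIl H H') (subsetIl A A') hzw.
have hzw_right := relB_sub (subsetIr H H') (subsetIr A A') hzw.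
rewrite -(subrK (delta w) z); split; first exact: (relBD hzw_left (delta_relB_left hw)).
rewrite [- (_ + delta w)]opprD; exact: (relBD (relBN hzw_right) (delta_relB_right hw)).
Qed.

Lemma exact_at_sum n a b : relZ H A n a -> relZ H' A' n b ->
  relB HU AU n (a + b) <->
  (exists z, relZ HI AI n z /\ relB H A n (a - z) /\ relB H' A' n (b + z)).
Proof.
move=> ha hb; split.
  move=> /relB_union_split [c1 h1 h2].
  exists (a - c1); split; last by rewrite subKr addrCA addrA.
  apply: relZI; first exact: (relZB ha (relB_relZ sAH h1)).
  have -> : a - c1 = (a + b - c1) - b by rewrite addrAC addrK.
  exact: (relZB (relB_relZ sAH' h2) hb).
move=> [z [_ [h1 h2]]].
have -> : a + b = (a - z) + (b + z) by rewrite addrACA addNr addr0.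
exact: (relBD (relB_sub (subsetUl _ _) (subsetUl _ _) h1)
              (relB_sub (subsetUr _ _) (subsetUr _ _) h2)).
Qed.

Lemma exact_at_union n w : relZ HU AU n.+1 w ->
  relB HI AI n (delta w) <->
  (exists a b, relZ H A n.+1 a /\ relZ H' A' n.+1 b /\ relB HU AU n.+1 (w - (a + b))).
Proof.
move=> hw; have [hw1 hbw] := hw.
have [h1 h2] := Inf_split cH hw1; have [h3 h4] := Inf_split cA hbw.
split.
  move=> [e [q [he [hq eq]]]].
  have he1 := Inf_sub (subsetIl H H') he; have he2 := Inf_sub (subsetIr H H') he.
  have hq1 := Inf_sub (subsetIl A A') hq; have hq2 := Inf_sub (subsetIr A A') hq.
  have Ebd : bd (restrict H w - e) = q + restrict A (bd w).
    rewrite raddfB /=.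
    have -> : bd (restrict H w) = delta w + restrict A (bd w) by rewrite subrK.
    by rewrite eq -addrA addrC subrKA addrC.
  exists (restrict H w - e), (w - (restrict H w - e)); split; last split.
  - by split; [exact: InfB | rewrite Ebd; exact: InfD].
  - split; first by rewrite opprB addrCA; exact: InfD.
    by rewrite raddfB /= Ebd (addrC q) opprD addrA; exact: InfB.
  - by rewrite subrKC subrr; exact: relB0.
move=> [a [b [ha [hb hc]]]]; have [c1 k1 k2] := relB_union_split hc.
apply: (delta_sum hw (y1 := a + c1) (y2 := b + (w - (a + b) - c1))).
- by rewrite addrACA subrKC subrKC.
- exact: (relZD ha (relB_relZ sAH k1)).
- exact: (relZD hb (relB_relZ sAH' k2)).
Qed.

Lemma exact_at_union0 w : relZ HU AU 0 w ->
  exists a b, relZ H A 0 a /\ relZ H' A' 0 b /\ relB HU AU 0 (w - (a + b)).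
Proof.
move=> [hw _]; have [h1 h2] := Inf_split cH hw.
exists (restrict H w), (w - restrict H w); do 2 (split; first by split).
by rewrite subrKC subrr; exact: relB0.
Qed.

End MayerVietoris.

Theorem theorem3p888 (V : finType) (G : zmodType)
  (H A H' A' : {set {set V}}) :
  hypergraph H -> hypergraph A -> hypergraph H' -> hypergraph A' ->
  A \subset H -> A' \subset H' ->
  (forall s s', s \in H -> s' \in H' ->
     s :&: s' = set0 \/ s :&: s' \in H :&: H') ->
  (forall t t', t \in A -> t' \in A' ->
     t :&: t' = set0 \/ t :&: t' \in A :&: A') ->
  exists delta : nat -> {ffun {set V} -> G} -> {ffun {set V} -> G},
    (* delta_n is a well-defined group homomorphism on homology *)
    (forall n (z : {ffun {set V} -> G}), relZ (H :|: H') (A :|: A') n.+1 z ->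
       relZ (H :&: H') (A :&: A') n (delta n z)) /\
    (forall n (z z' : {ffun {set V} -> G}), relZ (H :|: H') (A :|: A') n.+1 z ->
       relZ (H :|: H') (A :|: A') n.+1 z' ->
       relB (H :|: H') (A :|: A') n.+1 (z - z') ->
       relB (H :&: H') (A :&: A') n (delta n z - delta n z')) /\
    (forall n (z z' : {ffun {set V} -> G}), relZ (H :|: H') (A :|: A') n.+1 z ->
       relZ (H :|: H') (A :|: A') n.+1 z' ->
       relB (H :&: H') (A :&: A') n (delta n (z + z') - (delta n z + delta n z'))) /\
    (* exactness at H_n(HnH', AnA') : ker i_n = im delta_n *)
    (forall n (z : {ffun {set V} -> G}), relZ (H :&: H') (A :&: A') n z ->
       (relB H A n z /\ relB H' A' n (- z)) <->
       (exists w : {ffun {set V} -> G}, relZ (H :|: H') (A :|: A') n.+1 w /\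
                  relB (H :&: H') (A :&: A') n (z - delta n w))) /\
    (* exactness at H_n(H,A) (+) H_n(H',A') : ker j_n = im i_n *)
    (forall n (a b : {ffun {set V} -> G}), relZ H A n a -> relZ H' A' n b ->
       relB (H :|: H') (A :|: A') n (a + b) <->
       (exists z : {ffun {set V} -> G}, relZ (H :&: H') (A :&: A') n z /\
                  relB H A n (a - z) /\ relB H' A' n (b + z))) /\
    (* exactness at H_(n+1)(HuH', AuA') : ker delta_n = im j_(n+1) *)
    (forall n (w : {ffun {set V} -> G}), relZ (H :|: H') (A :|: A') n.+1 w ->
       relB (H :&: H') (A :&: A') n (delta n w) <->
       (exists a b : {ffun {set V} -> G}, relZ H A n.+1 a /\ relZ H' A' n.+1 b /\
                    relB (H :|: H') (A :|: A') n.+1 (w - (a + b)))) /\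
    (* exactness at H_0(HuH', AuA') : j_0 is surjective *)
    (forall (w : {ffun {set V} -> G}), relZ (H :|: H') (A :|: A') 0 w ->
       exists a b : {ffun {set V} -> G}, relZ H A 0 a /\ relZ H' A' 0 b /\
                   relB (H :|: H') (A :|: A') 0 (w - (a + b))).
Proof.
move=> _ _ _ _ sAH sAH' cH cA.
exists (fun=> delta H A).
split; first exact: (delta_relZ sAH sAH' cH cA).
split; first by move=> n z z' _ _; rewrite -raddfB; exact: (delta_relB sAH sAH' cH cA).
split; first by move=> n z z' _ _; rewrite raddfD subrr; exact: relB0.
split; first exact: (exact_at_intersection cH cA).
split; first exact: (exact_at_sum sAH sAH' cH cA).
split; first exact: (exact_at_union sAH sAH' cH cA).
exact: (exact_at_union0 cH).
Qed.
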